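(* Let $N$ be a positive integer and let $f:\mathbb{N}\to\mathbb{C}$ be periodic with period $N$. Let $a_n(q)$ be the sequence of polynomials in $q$ defined recursively by \[ a_0(q)=0,\qquad a_n(q) = f(n) + \left(1-q^{n-1}\right)a_{n-1}(q) \quad \text{for } n\in\mathbb{N}. \] Set $\zeta_N:=e^{2\pi i/N}$ and, for integers $k$, \[ c_k := \frac{1}{N}\sum_{1\le j\le N} f(j)\,\zeta_N^{(1-j)k}. \] Then for $q\in\mathbb{C}$ with $|q|<1$ the limit below exists and \[ \lim_{n\rightarrow\infty}\left( \sum_{1\le\ell\le n} f(\ell) - a_n(q)\right) = c_0S_0(q) - (q;q)_\infty \sum_{1\le k\le N-1} \frac{c_k}{(\zeta_N^k;q)_\infty} + \sum_{1\le k\le N-1} \frac{c_k}{1-\zeta_N^k}. \]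
   Context: For $n\in\mathbb{N}_0\cup\{\infty\}$, $(a;q)_n := \prod_{j=0}^{n-1}(1-aq^j)$. $S_0(q):=\sum_{n\ge1}\sigma_0(n)q^n$, where $\sigma_0(n)=\sum_{d\mid n}1$ is the number of positive divisors of $n$. *)

From Stdlib Require Import Reals ZArith List Arith.
From Coquelicot Require Import Coquelicot.
Open Scope C_scope.

Definition Cpowz (z : C) (m : Z) : C :=
  if (0 <=? m)%Z then Cpow z (Z.to_nat m) else / Cpow z (Z.to_nat (- m)).

(* Csum F m n = F m + F (m+1) + ... + F n  (0 if n < m) *)
Definition Csum (F : nat -> C) (m n : nat) : C :=
  fold_right Cplus 0 (map F (seq m (S n - m))).

(* limit of a sequence in C (total operator; meaningful when the sequence converges) *)
Definition Clim (u : nat -> C) : C :=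
  @lim C_CompleteNormedModule (filtermap u eventually).

Fixpoint qpoch (a q : C) (n : nat) : C :=
  match n with O => 1 | S m => qpoch a q m * (1 - a * Cpow q m) end.

Definition qpoch_inf (a q : C) : C := Clim (qpoch a q).

Definition sigma0 (n : nat) : nat :=
  length (filter (fun d => Nat.eqb (n mod d) 0) (seq 1 n)).

Definition S0 (q : C) : C :=
  Clim (fun n => Csum (fun m => RtoC (INR (sigma0 m)) * Cpow q m) 1 n).

Fixpoint aseq (f : nat -> C) (q : C) (n : nat) : C :=
  match n with
  | O => 0
  | S m => f (S m) + (1 - Cpow q m) * aseq f q m
  end.

Definition zetaN (N : nat) : C := (cos (2 * PI / INR N), sin (2 * PI / INR N)).

Definition ccoef (f : nat -> C) (N : nat) (k : Z) : C :=
  / RtoC (INR N) *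
  Csum (fun j => f j * Cpowz (zetaN N) ((1 - Z.of_nat j) * k)%Z) 1 N.

From Stdlib Require Import Reals ZArith List Arith Lia Lra.
From Coquelicot Require Import Coquelicot.
Open Scope C_scope.

(* Expanding f in N-th roots of unity, f(j) = sum_k c_k zeta^(k(j-1)), and using that
   f |-> a_n(q) is linear, it suffices to treat f(j) = z^(j-1) with |z| <= 1.  Write V_n(w)
   for a_n(q) when f(j) = w^(j-1); then (1 - w) V_n(w) = V_n(wq) - w^n.  Iterating this n
   times and comparing with V_n(0) = (q;q)_(n-1) gives V_n(w) -> (q;q)_oo / (w;q)_oo for
   |w| <= |q|, hence the limit 1/(1-z) - (q;q)_oo/(z;q)_oo when z <> 1.  For z = 1,
   n - a_n(q) = Y_n(q), where Y_n(w) is a_n(q) for the weight f(j) = (j-1) w^(j-1);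
   a companion functional equation telescopes Y_n(q) into the Lambert series
   sum_d q^d/(1-q^d) = S_0(q).  All error terms are O(n^2 |q|^n), because the products
   prod_k (1 + |q|^k) are bounded. *)

(** * Finite sums and limits *)

Fixpoint sumC (F : nat -> C) (n : nat) : C :=
  match n with O => 0 | S m => sumC F m + F m end.

Lemma sumC_ext (F G : nat -> C) n :
  (forall i, (i < n)%nat -> F i = G i) -> sumC F n = sumC G n.
Proof.
  induction n as [|n IH]; intros H; simpl; [reflexivity|].
  rewrite IH by (intros; apply H; lia). now rewrite H by lia.
Qed.

Lemma sumC_plus (F G : nat -> C) n :
  sumC (fun i => F i + G i) n = sumC F n + sumC G n.
Proof. induction n as [|n IH]; simpl; [ring|rewrite IH; ring]. Qed.

Lemma sumC_minus (F G : nat -> C) n :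
  sumC (fun i => F i - G i) n = sumC F n - sumC G n.
Proof. induction n as [|n IH]; simpl; [ring|rewrite IH; ring]. Qed.

Lemma sumC_scal_l (c : C) (F : nat -> C) n :
  sumC (fun i => c * F i) n = c * sumC F n.
Proof. induction n as [|n IH]; simpl; [ring|rewrite IH; ring]. Qed.

Lemma sumC_scal_r (c : C) (F : nat -> C) n :
  sumC (fun i => F i * c) n = sumC F n * c.
Proof. induction n as [|n IH]; simpl; [ring|rewrite IH; ring]. Qed.

Lemma sumC_0 n : sumC (fun _ => 0) n = 0.
Proof. induction n as [|n IH]; simpl; [reflexivity|rewrite IH; ring]. Qed.

Lemma sumC_const_1 n : sumC (fun _ => 1) n = INR n.
Proof.
  induction n as [|n IH]; simpl sumC; [reflexivity|].
  rewrite IH, S_INR, RtoC_plus; reflexivity.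
Qed.

Lemma sumC_Sl (F : nat -> C) n :
  sumC F (S n) = F 0%nat + sumC (fun i => F (S i)) n.
Proof.
  induction n as [|n IH]; [simpl; ring|].
  change (sumC F (S (S n))) with (sumC F (S n) + F (S n)).
  rewrite IH; simpl; ring.
Qed.

Lemma sumC_add (F : nat -> C) m k :
  sumC F (m + k) = sumC F m + sumC (fun i => F (m + i)%nat) k.
Proof.
  induction k as [|k IH]; simpl; [rewrite Nat.add_0_r; ring|].
  rewrite Nat.add_succ_r; simpl; rewrite IH; ring.
Qed.

Lemma sumC_swap (F : nat -> nat -> C) m n :
  sumC (fun i => sumC (fun j => F i j) n) m = sumC (fun j => sumC (fun i => F i j) m) n.
Proof.
  induction m as [|m IH]; simpl; [now rewrite sumC_0|].
  rewrite IH, <- sumC_plus; reflexivity.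
Qed.

Lemma sumC_single (F : nat -> C) n i0 : (i0 < n)%nat ->
  (forall i, (i < n)%nat -> i <> i0 -> F i = 0) -> sumC F n = F i0.
Proof.
  induction n as [|n IH]; intros Hi H; [lia|simpl].
  destruct (Nat.eq_dec i0 n) as [->|Hne].
  - rewrite (sumC_ext F (fun _ => 0)), sumC_0; [ring|].
    intros i Hi'; apply H; lia.
  - rewrite IH, (H n); [ring|lia..|intros; apply H; lia].
Qed.

Lemma Cmod_sumC_le (F : nat -> C) n M :
  (forall i, (i < n)%nat -> (Cmod (F i) <= M)%R) -> (Cmod (sumC F n) <= INR n * M)%R.
Proof.
  induction n as [|n IH]; intros H; simpl sumC.
  - rewrite Cmod_0; simpl; lra.
  - eapply Rle_trans; [apply Cmod_triangle|].
    rewrite S_INR.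
    assert (H1 := IH (fun i Hi => H i ltac:(lia))). assert (H2 := H n ltac:(lia)). lra.
Qed.

Lemma sumC_geom (w : C) n : (1 - w) * sumC (Cpow w) n = 1 - Cpow w n.
Proof.
  induction n as [|n IH]; simpl sumC; [simpl; ring|].
  rewrite Cmult_plus_distr_l, IH; simpl; ring.
Qed.

Lemma Csum_sumC (F : nat -> C) n : Csum F 1 n = sumC (fun i => F (S i)) n.
Proof.
  unfold Csum. replace (S n - 1)%nat with n by lia.
  assert (H : forall m, fold_right Cplus 0 (map F (seq m n)) = sumC (fun i => F (m + i)%nat) n).
  { induction n as [|n IH]; intros m; [reflexivity|].
    rewrite sumC_Sl; simpl; rewrite IH, Nat.add_0_r.
    f_equal; apply sumC_ext; intros; f_equal; lia. }
  apply H.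
Qed.

Definition cv (u : nat -> C) (l : C) : Prop :=
  forall eps, (0 < eps)%R ->
  exists N, forall n, (N <= n)%nat -> (Cmod (u n - l) < eps)%R.

Lemma cv_ext u v l : (forall n, u n = v n) -> cv u l -> cv v l.
Proof.
  intros H Hu eps He. destruct (Hu eps He) as [N HN].
  exists N; intros n Hn; rewrite <- H; auto.
Qed.

Lemma cv_S_iff u l : cv (fun n => u (S n)) l <-> cv u l.
Proof.
  split; intros H eps He; destruct (H eps He) as [N HN].
  - exists (S N); intros [|n] Hn; [lia|apply HN; lia].
  - exists N; intros n Hn; apply HN; lia.
Qed.

Lemma cv_const c : cv (fun _ => c) c.
Proof.
  intros eps He; exists 0%nat; intros n _.
  replace (c - c) with (RtoC 0) by ring; rewrite Cmod_0; exact He.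
Qed.

Lemma cv_plus u v a b : cv u a -> cv v b -> cv (fun n => u n + v n) (a + b).
Proof.
  intros Hu Hv eps He.
  destruct (Hu (eps / 2)%R ltac:(lra)) as [N1 H1].
  destruct (Hv (eps / 2)%R ltac:(lra)) as [N2 H2].
  exists (max N1 N2); intros n Hn.
  replace (u n + v n - (a + b)) with ((u n - a) + (v n - b)) by ring.
  eapply Rle_lt_trans; [apply Cmod_triangle|].
  assert (A1 := H1 n ltac:(lia)); assert (A2 := H2 n ltac:(lia)); lra.
Qed.

Lemma cv_scal c u a : cv u a -> cv (fun n => c * u n) (c * a).
Proof.
  intros Hu eps He. assert (Hc := Cmod_ge_0 c).
  destruct (Hu (eps / (Cmod c + 1))%R) as [N HN].
  { apply Rdiv_lt_0_compat; lra. }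
  exists N; intros n Hn.
  replace (c * u n - c * a) with (c * (u n - a)) by ring.
  rewrite Cmod_mult. assert (A := HN n Hn). assert (B := Cmod_ge_0 (u n - a)).
  apply Rle_lt_trans with ((Cmod c + 1) * Cmod (u n - a))%R; [nra|].
  replace eps with ((Cmod c + 1) * (eps / (Cmod c + 1)))%R by (field; lra).
  apply Rmult_lt_compat_l; lra.
Qed.

Lemma cv_minus u v a b : cv u a -> cv v b -> cv (fun n => u n - v n) (a - b).
Proof.
  intros Hu Hv. apply cv_plus; [exact Hu|].
  apply (cv_ext (fun n => (-1) * v n)); [intros; ring|].
  replace (- b) with ((-1) * b) by ring. now apply cv_scal.
Qed.

Lemma cv_sumC (u : nat -> nat -> C) (l : nat -> C) K :
  (forall k, (k < K)%nat -> cv (u k) (l k)) ->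
  cv (fun n => sumC (fun k => u k n) K) (sumC l K).
Proof.
  induction K as [|K IH]; intros H; simpl; [apply cv_const|].
  apply cv_plus; [apply IH; intros; apply H|apply H]; lia.
Qed.

Lemma cv_bounded u a : cv u a -> exists M, (0 < M)%R /\ forall n, (Cmod (u n) <= M)%R.
Proof.
  intros H. destruct (H 1%R ltac:(lra)) as [N HN].
  assert (Hinit : exists M, (0 < M)%R /\ forall n, (n < N)%nat -> (Cmod (u n) <= M)%R).
  { clear HN. induction N as [|N [M [HM1 HM2]]]; [exists 1%R; split; [lra|lia]|].
    exists (Rmax M (Cmod (u N))); split; [eapply Rlt_le_trans; [apply HM1|apply Rmax_l]|].
    intros n Hn. destruct (Nat.eq_dec n N) as [->|]; [apply Rmax_r|].
    eapply Rle_trans; [apply HM2; lia|apply Rmax_l]. }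
  destruct Hinit as [M [HM1 HM2]].
  exists (Rmax M (Cmod a + 1)); split; [eapply Rlt_le_trans; [apply HM1|apply Rmax_l]|].
  intros n. destruct (Nat.lt_ge_cases n N) as [Hn|Hn].
  - eapply Rle_trans; [apply HM2; exact Hn|apply Rmax_l].
  - eapply Rle_trans; [|apply Rmax_r].
    replace (u n) with ((u n - a) + a) by ring.
    eapply Rle_trans; [apply Cmod_triangle|]. assert (A := HN n Hn); lra.
Qed.

Lemma cv_mult u v a b : cv u a -> cv v b -> cv (fun n => u n * v n) (a * b).
Proof.
  intros Hu Hv. destruct (cv_bounded u a Hu) as [M [HM1 HM2]].
  intros eps He. assert (Hb := Cmod_ge_0 b).
  destruct (Hu (eps / (2 * (Cmod b + 1)))%R) as [N1 H1]; [apply Rdiv_lt_0_compat; lra|].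
  destruct (Hv (eps / (2 * M))%R) as [N2 H2]; [apply Rdiv_lt_0_compat; lra|].
  exists (max N1 N2); intros n Hn.
  replace (u n * v n - a * b) with (u n * (v n - b) + (u n - a) * b) by ring.
  eapply Rle_lt_trans; [apply Cmod_triangle|]. rewrite !Cmod_mult.
  assert (A1 := H1 n ltac:(lia)). assert (A2 := H2 n ltac:(lia)). assert (B := HM2 n).
  assert (C1 := Cmod_ge_0 (u n)). assert (C2 := Cmod_ge_0 (v n - b)).
  assert (C3 := Cmod_ge_0 (u n - a)).
  assert (Cmod (u n) * Cmod (v n - b) <= M * (eps / (2 * M)))%R by nra.
  assert (Cmod (u n - a) * Cmod b < eps / (2 * (Cmod b + 1)) * (Cmod b + 1))%R by nra.
  replace (M * (eps / (2 * M)))%R with (eps / 2)%R in * by (field; lra).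
  replace (eps / (2 * (Cmod b + 1)) * (Cmod b + 1))%R with (eps / 2)%R in * by (field; lra).
  lra.
Qed.

Lemma cv_inv v b c : cv v b -> (0 < c)%R -> (forall n, (c <= Cmod (v n))%R) -> b <> 0 ->
  cv (fun n => / v n) (/ b).
Proof.
  intros Hv Hc Hl Hb eps He.
  assert (Hb' : (0 < Cmod b)%R).
  { destruct (Rle_lt_or_eq_dec _ _ (Cmod_ge_0 b)) as [|E]; [assumption|].
    now apply eq_sym, Cmod_eq_0 in E. }
  destruct (Hv (eps * c * Cmod b)%R) as [N HN]; [apply Rmult_lt_0_compat; nra|].
  exists N; intros n Hn. assert (A := HN n Hn). assert (B := Hl n).
  assert (Hvn : v n <> 0) by (intros E; rewrite E, Cmod_0 in B; lra).
  replace (/ v n - / b) with (- (v n - b) / (v n * b)) by (field; auto).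
  unfold Cdiv. rewrite Cmod_mult, Cmod_inv, Cmod_mult, Cmod_opp by (apply Cmult_neq_0; auto).
  assert (Hpos : (0 < Cmod (v n) * Cmod b)%R) by nra.
  apply Rmult_lt_reg_r with (Cmod (v n) * Cmod b)%R; [exact Hpos|].
  rewrite Rmult_assoc, Rinv_l, Rmult_1_r by (apply Rgt_not_eq, Hpos).
  assert (0 <= (Cmod (v n) - c) * (eps * Cmod b))%R by (apply Rmult_le_pos; nra).
  nra.
Qed.

Lemma cv_unique u a b : cv u a -> cv u b -> a = b.
Proof.
  intros Ha Hb.
  destruct (Req_dec (Cmod (a - b)) 0) as [E|E].
  - apply Cmod_eq_0 in E. replace a with ((a - b) + b) by ring. rewrite E; ring.
  - assert (Hpos : (0 < Cmod (a - b))%R) by (assert (A := Cmod_ge_0 (a - b)); lra).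
    destruct (Ha (Cmod (a - b) / 2)%R ltac:(lra)) as [N1 H1].
    destruct (Hb (Cmod (a - b) / 2)%R ltac:(lra)) as [N2 H2].
    set (n := max N1 N2). assert (A1 := H1 n ltac:(lia)). assert (A2 := H2 n ltac:(lia)).
    assert (T := Cmod_triangle (- (u n - a)) (u n - b)).
    replace (- (u n - a) + (u n - b)) with (a - b) in T by ring.
    rewrite Cmod_opp in T. lra.
Qed.

Lemma cv_Cmod_ge u l c : cv u l -> (forall n, (c <= Cmod (u n))%R) -> (c <= Cmod l)%R.
Proof.
  intros H Hc. apply Rnot_lt_le; intros Hlt.
  destruct (H (c - Cmod l)%R ltac:(lra)) as [N HN]. assert (A := HN N (le_n _)).
  assert (T := Cmod_triangle (u N - l) l). replace (u N - l + l) with (u N) in T by ring.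
  assert (B := Hc N). lra.
Qed.

Lemma cv_filterlim u l : cv u l -> filterlim u eventually (locally l).
Proof.
  intros H. apply filterlim_locally. intros [eps He].
  destruct (H eps He) as [N HN]. exists N; intros n Hn.
  apply C_NormedModule_mixin_compat1, HN, Hn.
Qed.

Lemma filterlim_cv u l : filterlim u eventually (locally l) -> cv u l.
Proof.
  intros H eps He. assert (He2 : (0 < eps / 2)%R) by lra.
  destruct (proj1 (filterlim_locally u l) H (mkposreal _ He2)) as [N HN].
  exists N; intros n Hn.
  assert (A := C_NormedModule_mixin_compat2 _ _ _ (HN n Hn)). simpl in A.
  assert (sqrt 2 < 2)%R by (rewrite <- (sqrt_square 2) at 2 by lra; apply sqrt_lt_1; lra).
  apply (Rlt_trans _ _ _ A). nra.
Qed.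

Lemma cv_Clim_of_cauchy u :
  (forall eps, (0 < eps)%R -> exists N, forall n, (N <= n)%nat -> (Cmod (u n - u N) < eps)%R) ->
  cv u (Clim u).
Proof.
  intros H. apply filterlim_cv. apply (filterlim_locally u). intros eps.
  apply (@complete_cauchy C_CompleteNormedModule (filtermap u eventually)).
  - apply filtermap_proper_filter, eventually_filter.
  - intros e. destruct (H e (cond_pos e)) as [N HN]. exists (u N), N.
    intros n Hn. apply C_NormedModule_mixin_compat1, HN, Hn.
Qed.

Lemma cv_Clim u l : cv u l -> Clim u = l.
Proof.
  intros H. apply (cv_unique u); [|exact H]. apply cv_Clim_of_cauchy.
  intros eps He. destruct (H (eps / 2)%R ltac:(lra)) as [N HN]. exists N; intros n Hn.
  replace (u n - u N) with ((u n - l) + - (u N - l)) by ring.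
  eapply Rle_lt_trans; [apply Cmod_triangle|]. rewrite Cmod_opp.
  assert (A := HN n Hn). assert (B := HN N (le_n _)). lra.
Qed.

Lemma exp_le_compat x y : (x <= y)%R -> (exp x <= exp y)%R.
Proof.
  intros H. destruct (Rle_lt_or_eq_dec _ _ H) as [Hlt| ->]; [|lra].
  apply Rlt_le, exp_increasing, Hlt.
Qed.

Lemma exp_le_1_minus s y : (0 <= s < 1)%R -> (0 <= y <= 1)%R ->
  (exp (- (s / (1 - s)) * y) <= 1 - s * y)%R.
Proof.
  intros Hs Hy. assert (Hsy : (0 <= s * y <= s)%R) by (split; nra).
  replace (- (s / (1 - s)) * y)%R with (- (s * y / (1 - s)))%R by (field; lra).
  rewrite exp_Ropp.
  assert (H : (/ (1 - s * y) <= exp (s * y / (1 - s)))%R).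
  { eapply Rle_trans; [|apply exp_ineq1_le].
    replace (/ (1 - s * y))%R with (1 + s * y / (1 - s * y))%R by (field; lra).
    apply Rplus_le_compat_l. unfold Rdiv. apply Rmult_le_compat_l; [lra|].
    apply Rinv_le_contravar; lra. }
  replace (1 - s * y)%R with (/ / (1 - s * y))%R by (field; lra).
  apply Rinv_le_contravar; [apply Rinv_0_lt_compat; lra|exact H].
Qed.

Lemma pow_le_1 r n : (0 <= r <= 1)%R -> (r ^ n <= 1)%R.
Proof. intros Hr. rewrite <- (pow1 n). apply pow_incr; lra. Qed.

Lemma pow_le_pow_anti r a b : (0 <= r <= 1)%R -> (a <= b)%nat -> (r ^ b <= r ^ a)%R.
Proof.
  intros Hr Hab. replace b with (a + (b - a))%nat by lia. rewrite pow_add.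
  assert (0 <= r ^ a)%R by (apply pow_le; lra).
  assert (r ^ (b - a) <= 1)%R by (apply pow_le_1; lra). nra.
Qed.

Lemma pow_ge_binomial2 h n : (0 <= h)%R ->
  (1 + INR n * h + INR n * (INR n - 1) / 2 * h ^ 2 <= (1 + h) ^ n)%R.
Proof.
  intros Hh. induction n as [|n IH]; [simpl; lra|].
  change ((1 + h) ^ S n)%R with ((1 + h) * (1 + h) ^ n)%R. rewrite S_INR.
  assert (Hc : (0 <= INR n * (INR n - 1) / 2 * h ^ 3)%R).
  { destruct n; [simpl; lra|]. rewrite S_INR.
    assert (A := pos_INR n). assert (0 <= h ^ 3)%R by (apply pow_le; lra).
    apply Rmult_le_pos; [|lra]. unfold Rdiv. apply Rmult_le_pos; [nra|lra]. }
  apply Rle_trans with ((1 + h) * (1 + INR n * h + INR n * (INR n - 1) / 2 * h ^ 2))%R;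
    [|apply Rmult_le_compat_l; lra].
  match goal with |- (?lhs <= ?rhs)%R =>
    assert (E : (rhs - lhs = INR n * (INR n - 1) / 2 * h ^ 3)%R) by field end.
  lra.
Qed.

Lemma n_pow_small s eps : (0 <= s < 1)%R -> (0 < eps)%R ->
  exists N, forall n, (N <= n)%nat -> (INR n * s ^ n < eps)%R.
Proof.
  intros Hs He. destruct (Req_dec s 0) as [->|Hs0].
  { exists 1%nat; intros [|n] Hn; [lia|simpl; lra]. }
  set (h := (/ s - 1)%R).
  assert (Hh : (0 < h)%R).
  { assert (1 < / s)%R by (rewrite <- Rinv_1; apply Rinv_lt_contravar; lra). unfold h; lra. }
  assert (Hsh : forall n, (s ^ n * (1 + h) ^ n = 1)%R).
  { intros n. rewrite <- Rpow_mult_distr. unfold h.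
    replace (s * (1 + (/ s - 1)))%R with 1%R by (field; lra). apply pow1. }
  destruct (INR_archimed (eps * h ^ 2 / 2) 1) as [N HN];
    [apply Rdiv_lt_0_compat; [apply Rmult_lt_0_compat; [lra|apply pow_lt; lra]|lra]|].
  exists (S (S N)); intros n Hn.
  assert (B := pow_ge_binomial2 h n (Rlt_le _ _ Hh)). assert (Hs1 := Hsh n).
  assert (HnN : (INR N + 1 <= INR n - 1)%R).
  { assert (A := le_INR _ _ Hn). rewrite !S_INR in A. lra. }
  assert (Hh2 : (0 < h ^ 2)%R) by (apply pow_lt; lra).
  assert (Hsn : (0 < s ^ n)%R) by (apply pow_lt; lra).
  assert (1 < eps * h ^ 2 / 2 * (INR n - 1))%R.
  { apply Rlt_le_trans with (INR N * (eps * h ^ 2 / 2))%R; [lra|].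
    rewrite Rmult_comm. apply Rmult_le_compat_l; [|lra].
    apply Rlt_le, Rdiv_lt_0_compat; [apply Rmult_lt_0_compat|]; lra. }
  assert (0 <= INR n * h)%R by (apply Rmult_le_pos; [apply pos_INR|lra]).
  assert (Hbin : (s ^ n * (INR n * (INR n - 1) / 2 * h ^ 2) <= 1)%R).
  { apply Rle_trans with (s ^ n * (1 + h) ^ n)%R; [apply Rmult_le_compat_l|]; lra. }
  assert (P : (0 < INR n * s ^ n)%R) by (apply Rmult_lt_0_compat; [apply lt_0_INR; lia|lra]).
  assert (Q : (INR n * s ^ n * 1 < INR n * s ^ n * (eps * h ^ 2 / 2 * (INR n - 1)))%R)
    by (apply Rmult_lt_compat_l; lra).
  replace (INR n * s ^ n * (eps * h ^ 2 / 2 * (INR n - 1)))%R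
    with (eps * (s ^ n * (INR n * (INR n - 1) / 2 * h ^ 2)))%R in Q by field.
  nra.
Qed.

Lemma n2_pow_small r eps : (0 <= r < 1)%R -> (0 < eps)%R ->
  exists N, forall n, (N <= n)%nat -> (INR n * INR n * r ^ n < eps)%R.
Proof.
  intros Hr He.
  assert (Hs : (0 <= sqrt r < 1)%R).
  { split; [apply sqrt_pos|rewrite <- sqrt_1; apply sqrt_lt_1; lra]. }
  destruct (n_pow_small (sqrt r) (Rmin 1 eps) Hs) as [N HN]; [apply Rmin_glb_lt; lra|].
  exists N; intros n Hn. assert (A := HN n Hn).
  replace (INR n * INR n * r ^ n)%R with ((INR n * sqrt r ^ n) * (INR n * sqrt r ^ n))%R
    by (rewrite <- (sqrt_sqrt r) at 3 by lra; rewrite Rpow_mult_distr; ring).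
  assert (0 <= INR n * sqrt r ^ n)%R by (apply Rmult_le_pos; [apply pos_INR|apply pow_le; lra]).
  assert (B1 := Rmin_l 1 eps). assert (B2 := Rmin_r 1 eps). nra.
Qed.

Lemma cv_of_n2_pow_close u v l K r : (0 <= r < 1)%R -> cv v l ->
  (forall n, (Cmod (u n - v n) <= K * (INR (S n) * INR (S n) * r ^ S n))%R) -> cv u l.
Proof.
  intros Hr Hv H. apply (cv_ext (fun n => v n + (u n - v n))); [intros; ring|].
  rewrite <- (Cplus_0_r l). apply cv_plus; [exact Hv|]. intros eps He.
  assert (HK : (0 < Rabs K + 1)%R) by (assert (A := Rabs_pos K); lra).
  destruct (n2_pow_small r (eps / (Rabs K + 1)) Hr) as [N HN]; [apply Rdiv_lt_0_compat; lra|].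
  exists N; intros n Hn. assert (A := HN (S n) ltac:(lia)). assert (B := H n).
  replace (u n - v n - 0) with (u n - v n) by ring.
  assert (P : (0 <= INR (S n) * INR (S n) * r ^ S n)%R).
  { apply Rmult_le_pos; [apply Rmult_le_pos; apply pos_INR|apply pow_le; lra]. }
  assert (C1 := Rle_abs K).
  apply Rle_lt_trans with ((Rabs K + 1) * (INR (S n) * INR (S n) * r ^ S n))%R; [nra|].
  replace eps with ((Rabs K + 1) * (eps / (Rabs K + 1)))%R by (field; lra).
  apply Rmult_lt_compat_l; lra.
Qed.

Lemma cv_Clim_of_geom_increments u M r : (0 <= r < 1)%R ->
  (forall n, (Cmod (u (S n) - u n) <= M * r ^ n)%R) -> cv u (Clim u).
Proof.
  intros Hr H. apply cv_Clim_of_cauchy.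
  assert (HM : (0 <= M)%R).
  { assert (A := H 0%nat). assert (B := Cmod_ge_0 (u 1%nat - u 0%nat)). simpl in A. lra. }
  assert (T : forall N k, (Cmod (u (N + k)%nat - u N) <= M * (r ^ N - r ^ (N + k)) / (1 - r))%R).
  { intros N k. induction k as [|k IH].
    - rewrite Nat.add_0_r. replace (u N - u N) with (RtoC 0) by ring.
      replace (M * (r ^ N - r ^ N) / (1 - r))%R with 0%R by (field; lra).
      rewrite Cmod_0; lra.
    - replace (u (N + S k)%nat - u N)
        with ((u (S (N + k)) - u (N + k)%nat) + (u (N + k)%nat - u N))
        by (rewrite Nat.add_succ_r; ring).
      eapply Rle_trans; [apply Cmod_triangle|]. assert (A := H (N + k)%nat).
      replace (M * (r ^ N - r ^ (N + S k)) / (1 - r))%R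
        with (M * r ^ (N + k) + M * (r ^ N - r ^ (N + k)) / (1 - r))%R
        by (rewrite Nat.add_succ_r; simpl; field; lra).
      lra. }
  intros eps He.
  destruct (pow_lt_1_zero r ltac:(rewrite Rabs_pos_eq; lra) (eps * (1 - r) / (M + 1))%R) as [N HN].
  { apply Rdiv_lt_0_compat; [apply Rmult_lt_0_compat|]; lra. }
  exists N; intros n Hn. replace n with (N + (n - N))%nat by lia.
  eapply Rle_lt_trans; [apply T|].
  assert (A := HN N (le_n _)). rewrite Rabs_pos_eq in A by (apply pow_le; lra).
  assert (0 <= r ^ (N + (n - N)))%R by (apply pow_le; lra).
  assert (0 <= r ^ N)%R by (apply pow_le; lra).
  apply Rmult_lt_reg_r with (1 - r)%R; [lra|].
  unfold Rdiv. rewrite Rmult_assoc, Rinv_l, Rmult_1_r by lra.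
  apply Rle_lt_trans with ((M + 1) * r ^ N)%R; [nra|].
  replace (eps * (1 - r))%R with ((M + 1) * (eps * (1 - r) / (M + 1)))%R by (field; lra).
  apply Rmult_lt_compat_l; lra.
Qed.

Lemma Cmod_div_le x y c : (0 < c)%R -> (c <= Cmod y)%R -> (Cmod (x / y) <= Cmod x / c)%R.
Proof.
  intros Hc Hy. assert (Hy0 : y <> 0) by (intros E; rewrite E, Cmod_0 in Hy; lra).
  unfold Cdiv. rewrite Cmod_mult, Cmod_inv by exact Hy0.
  apply Rmult_le_compat_l; [apply Cmod_ge_0|apply Rinv_le_contravar; assumption].
Qed.

Lemma Cmod_mult_pow a q n : Cmod (a * Cpow q n) = (Cmod a * Cmod q ^ n)%R.
Proof. rewrite Cmod_mult, Cmod_pow; reflexivity. Qed.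

Fixpoint rprod (r : R) (m : nat) : R :=
  match m with O => 1%R | S k => (rprod r k * (1 + r ^ k))%R end.

Lemma rprod_ge_1 r m : (0 <= r)%R -> (1 <= rprod r m)%R.
Proof.
  intros Hr. induction m as [|m IH]; simpl; [lra|].
  assert (0 <= r ^ m)%R by (apply pow_le; lra). nra.
Qed.

Lemma rprod_le_exp r m : (0 <= r < 1)%R -> (rprod r m <= exp (/ (1 - r)))%R.
Proof.
  intros Hr.
  assert (H : forall k, (rprod r k <= exp ((1 - r ^ k) / (1 - r)))%R).
  { intros k. induction k as [|k IH]; simpl.
    - replace ((1 - 1) / (1 - r))%R with 0%R by (field; lra). rewrite exp_0; lra.
    - replace ((1 - r * r ^ k) / (1 - r))%R with ((1 - r ^ k) / (1 - r) + r ^ k)%R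
        by (field; lra).
      rewrite exp_plus. assert (0 <= r ^ k)%R by (apply pow_le; lra).
      assert (G := rprod_ge_1 r k (proj1 Hr)).
      apply Rmult_le_compat; [lra|lra|exact IH|apply exp_ineq1_le]. }
  eapply Rle_trans; [apply H|].
  assert (Hle : ((1 - r ^ m) / (1 - r) <= / (1 - r))%R).
  { assert (0 <= r ^ m)%R by (apply pow_le; lra).
    unfold Rdiv. rewrite <- (Rmult_1_l (/ (1 - r))) at 2.
    apply Rmult_le_compat_r; [apply Rlt_le, Rinv_0_lt_compat|]; lra. }
  apply exp_le_compat, Hle.
Qed.

Lemma Cmod_recurrence_le (r D : R) (c d x : nat -> C) m : (0 <= r)%R -> x 0%nat = 0 ->
  (forall k, (k < m)%nat -> x (S k) = (1 - c k) * x k + d k) ->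
  (forall k, (k < m)%nat -> (Cmod (c k) <= r ^ k)%R) ->
  (forall k, (k < m)%nat -> (Cmod (d k) <= D)%R) ->
  (Cmod (x m) <= INR m * rprod r m * D)%R.
Proof.
  intros Hr H0 Hx Hc Hd. induction m as [|m IH].
  { rewrite H0, Cmod_0; simpl; lra. }
  assert (IH' := IH (fun k Hk => Hx k ltac:(lia)) (fun k Hk => Hc k ltac:(lia))
                    (fun k Hk => Hd k ltac:(lia))).
  rewrite Hx by lia. simpl rprod. rewrite S_INR.
  assert (HD : (0 <= D)%R) by (eapply Rle_trans; [apply Cmod_ge_0|apply (Hd m); lia]).
  assert (H1 : (Cmod (1 - c m) <= 1 + r ^ m)%R).
  { eapply Rle_trans; [apply Cmod_triangle|]. rewrite Cmod_opp, Cmod_1.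
    assert (A := Hc m ltac:(lia)). lra. }
  assert (G := rprod_ge_1 r m Hr). assert (0 <= r ^ m)%R by (apply pow_le; lra).
  assert (A := pos_INR m). assert (B := Cmod_ge_0 (x m)).
  eapply Rle_trans; [apply Cmod_triangle|]. rewrite Cmod_mult.
  apply Rle_trans with ((1 + r ^ m) * (INR m * rprod r m * D) + D)%R.
  - apply Rplus_le_compat; [|apply Hd; lia].
    apply Rmult_le_compat; [apply Cmod_ge_0|exact B|exact H1|exact IH'].
  - assert (0 <= INR m * rprod r m * D)%R by (apply Rmult_le_pos; [nra|lra]).
    assert (0 <= (rprod r m * (1 + r ^ m) - 1) * D)%R by (apply Rmult_le_pos; nra).
    nra.
Qed.

(** * q-Pochhammer symbols *)

Lemma qpoch_add a q m n : qpoch a q (m + n) = qpoch a q m * qpoch (a * Cpow q m) q n.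
Proof.
  induction n as [|n IH]; simpl; [rewrite Nat.add_0_r; ring|].
  rewrite Nat.add_succ_r; simpl. rewrite IH, Cpow_add_r. ring.
Qed.

Lemma Cmod_qpoch_le a q n : (Cmod a <= 1)%R -> (Cmod (qpoch a q n) <= rprod (Cmod q) n)%R.
Proof.
  intros Ha. induction n as [|n IH]; simpl; [rewrite Cmod_1; lra|].
  rewrite Cmod_mult. apply Rmult_le_compat; [apply Cmod_ge_0|apply Cmod_ge_0|exact IH|].
  eapply Rle_trans; [apply Cmod_triangle|]. rewrite Cmod_opp, Cmod_1, Cmod_mult_pow.
  assert (0 <= Cmod q ^ n)%R by (apply pow_le, Cmod_ge_0). nra.
Qed.

Lemma Cmod_qpoch_ge a q n : (Cmod a < 1)%R -> (Cmod q < 1)%R ->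
  (exp (- (Cmod a / (1 - Cmod a)) / (1 - Cmod q)) <= Cmod (qpoch a q n))%R.
Proof.
  intros Ha Hq. set (s := Cmod a). set (r := Cmod q). set (t := (s / (1 - s))%R).
  assert (Hs : (0 <= s < 1)%R) by (split; [apply Cmod_ge_0|exact Ha]).
  assert (Hr : (0 <= r < 1)%R) by (split; [apply Cmod_ge_0|exact Hq]).
  assert (Ht : (0 <= t)%R) by (apply Rdiv_le_0_compat; lra).
  assert (H : (exp (- t * ((1 - r ^ n) / (1 - r))) <= Cmod (qpoch a q n))%R).
  { induction n as [|n IH]; simpl qpoch.
    - rewrite Cmod_1. replace (- t * ((1 - r ^ 0) / (1 - r)))%R with 0%R by (simpl; field; lra).
      rewrite exp_0; lra.
    - rewrite Cmod_mult.
      assert (Hrn : (0 <= r ^ n <= 1)%R) by (split; [apply pow_le|apply pow_le_1]; lra).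
      assert (Hf : (exp (- t * r ^ n) <= Cmod (1 - a * Cpow q n))%R).
      { assert (A := Cmod_triangle (1 - a * Cpow q n) (a * Cpow q n)).
        replace (1 - a * Cpow q n + a * Cpow q n) with (RtoC 1) in A by ring.
        rewrite Cmod_1, Cmod_mult_pow in A. fold s r in A.
        assert (B := exp_le_1_minus s (r ^ n) Hs Hrn). fold t in B. lra. }
      replace (- t * ((1 - r ^ S n) / (1 - r)))%R
        with (- t * ((1 - r ^ n) / (1 - r)) + - t * r ^ n)%R by (simpl; field; lra).
      rewrite exp_plus. apply Rmult_le_compat; [left; apply exp_pos..|exact IH|exact Hf]. }
  eapply Rle_trans; [|exact H]. apply exp_le_compat.
  assert (0 <= r ^ n)%R by (apply pow_le; lra).
  replace (- t / (1 - r))%R with (- t * (1 / (1 - r)))%R by (field; lra).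
  apply Ropp_le_cancel. rewrite !Ropp_mult_distr_l, !Ropp_involutive.
  apply Rmult_le_compat_l; [exact Ht|]. unfold Rdiv.
  apply Rmult_le_compat_r; [apply Rlt_le, Rinv_0_lt_compat|]; lra.
Qed.

Lemma qpoch_neq_0 a q n : (Cmod a < 1)%R -> (Cmod q < 1)%R -> qpoch a q n <> 0.
Proof.
  intros Ha Hq E. assert (A := Cmod_qpoch_ge a q n Ha Hq).
  rewrite E, Cmod_0 in A. assert (B := exp_pos (- (Cmod a / (1 - Cmod a)) / (1 - Cmod q))). lra.
Qed.

Lemma qpoch_cv a q : (Cmod a <= 1)%R -> (Cmod q < 1)%R -> cv (qpoch a q) (qpoch_inf a q).
Proof.
  intros Ha Hq. set (r := Cmod q).
  assert (Hr : (0 <= r < 1)%R) by (split; [apply Cmod_ge_0|exact Hq]).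
  apply cv_Clim_of_geom_increments with (exp (/ (1 - r)) * Cmod a)%R r; [exact Hr|].
  intros n. simpl qpoch.
  replace (qpoch a q n * (1 - a * Cpow q n) - qpoch a q n) with (- (qpoch a q n * (a * Cpow q n)))
    by ring.
  rewrite Cmod_opp, Cmod_mult, Cmod_mult_pow, Rmult_assoc.
  apply Rmult_le_compat_r; [apply Rmult_le_pos; [apply Cmod_ge_0|apply pow_le; apply Cmod_ge_0]|].
  eapply Rle_trans; [apply Cmod_qpoch_le, Ha|apply rprod_le_exp, Hr].
Qed.

Lemma Cmod_qpoch_inf_ge a q : (Cmod a < 1)%R -> (Cmod q < 1)%R ->
  (exp (- (Cmod a / (1 - Cmod a)) / (1 - Cmod q)) <= Cmod (qpoch_inf a q))%R.
Proof.
  intros Ha Hq. apply (cv_Cmod_ge (qpoch a q)); [apply qpoch_cv; lra|].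
  intros n; apply Cmod_qpoch_ge; assumption.
Qed.

Lemma qpoch_inf_neq_0 a q : (Cmod a < 1)%R -> (Cmod q < 1)%R -> qpoch_inf a q <> 0.
Proof.
  intros Ha Hq E. assert (A := Cmod_qpoch_inf_ge a q Ha Hq).
  rewrite E, Cmod_0 in A. assert (B := exp_pos (- (Cmod a / (1 - Cmod a)) / (1 - Cmod q))). lra.
Qed.

Lemma qpoch_inf_S z q : (Cmod z <= 1)%R -> (Cmod q < 1)%R ->
  qpoch_inf z q = (1 - z) * qpoch_inf (z * q) q.
Proof.
  intros Hz Hq. assert (Hzq : (Cmod (z * q) <= 1)%R).
  { rewrite Cmod_mult. assert (A := Cmod_ge_0 z). assert (B := Cmod_ge_0 q). nra. }
  apply (cv_unique (fun n => qpoch z q (S n))); [apply cv_S_iff, qpoch_cv; assumption|].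
  apply (cv_ext (fun n => (1 - z) * qpoch (z * q) q n)); [|apply cv_scal, qpoch_cv; assumption].
  intros n. change (S n) with (1 + n)%nat. rewrite qpoch_add, Cpow_1_r. simpl. ring.
Qed.

(** * Geometric weights and divisor sums *)

(* The weight f(j) = w^(j-1); [pred j] rather than [j - 1] makes [geom w (S i)] reduce to
   [w ^ i]. *)
Definition geom (w : C) (j : nat) : C := Cpow w (pred j).

Lemma aseq_geom_fe w q n :
  (1 - w) * aseq (geom w) q (S n) = aseq (geom (w * q)) q (S n) - Cpow w (S n).
Proof.
  induction n as [|n IH]; [unfold geom; simpl; ring|].
  change (aseq (geom w) q (S (S n)))
    with (Cpow w (S n) + (1 - Cpow q (S n)) * aseq (geom w) q (S n)).
  change (aseq (geom (w * q)) q (S (S n)))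
    with (Cpow (w * q) (S n) + (1 - Cpow q (S n)) * aseq (geom (w * q)) q (S n)).
  replace ((1 - w) * (Cpow w (S n) + (1 - Cpow q (S n)) * aseq (geom w) q (S n)))
    with ((1 - w) * Cpow w (S n) + (1 - Cpow q (S n)) * ((1 - w) * aseq (geom w) q (S n)))
    by ring.
  rewrite IH, Cpow_mult_l, (Cpow_S w (S n)). ring.
Qed.

Lemma aseq_geom_0 q n : aseq (geom 0) q (S n) = qpoch q q n.
Proof.
  induction n as [|n IH]; [unfold geom; simpl; ring|].
  change (aseq (geom 0) q (S (S n)))
    with (Cpow 0 (S n) + (1 - Cpow q (S n)) * aseq (geom 0) q (S n)).
  rewrite IH; simpl; ring.
Qed.

Lemma aseq_geom_q q n : aseq (geom q) q (S n) = 1.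
Proof.
  induction n as [|n IH]; [unfold geom; simpl; ring|].
  change (aseq (geom q) q (S (S n)))
    with (Cpow q (S n) + (1 - Cpow q (S n)) * aseq (geom q) q (S n)).
  rewrite IH; ring.
Qed.

Lemma Csum_geom z n : (1 - z) * Csum (geom z) 1 n = 1 - Cpow z n.
Proof.
  rewrite Csum_sumC, <- sumC_geom. reflexivity.
Qed.

(* [dgeom w = w d/dw (geom w)]. *)
Definition dgeom (w : C) (j : nat) : C := INR (pred j) * Cpow w (pred j).

Lemma Csum_geom_1 n : Csum (geom 1) 1 n = INR n.
Proof.
  rewrite Csum_sumC, <- sumC_const_1. apply sumC_ext. intros i _. apply Cpow_1_l.
Qed.

Lemma Csum_geom_1_sub_aseq q n : Csum (geom 1) 1 n - aseq (geom 1) q n = aseq (dgeom q) q n.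
Proof.
  rewrite Csum_geom_1. induction n as [|n IH]; [cbn [aseq INR]; ring|].
  cbn [aseq]. change (geom 1 (S n)) with (Cpow 1 n).
  change (dgeom q (S n)) with (INR n * Cpow q n).
  rewrite <- IH, Cpow_1_l, S_INR, RtoC_plus. ring.
Qed.

Lemma aseq_dgeom_fe w q n :
  (1 - w) * aseq (dgeom w) q (S n)
  = aseq (dgeom (w * q)) q (S n) + w * aseq (geom w) q (S n) - INR (S n) * Cpow w (S n).
Proof.
  induction n as [|n IH]; [unfold dgeom, geom; simpl; ring|].
  change (aseq (dgeom w) q (S (S n)))
    with (INR (S n) * Cpow w (S n) + (1 - Cpow q (S n)) * aseq (dgeom w) q (S n)).
  change (aseq (dgeom (w * q)) q (S (S n)))
    with (INR (S n) * Cpow (w * q) (S n) + (1 - Cpow q (S n)) * aseq (dgeom (w * q)) q (S n)).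
  change (aseq (geom w) q (S (S n)))
    with (Cpow w (S n) + (1 - Cpow q (S n)) * aseq (geom w) q (S n)).
  replace ((1 - w) * (INR (S n) * Cpow w (S n) + (1 - Cpow q (S n)) * aseq (dgeom w) q (S n)))
    with ((1 - w) * INR (S n) * Cpow w (S n)
          + (1 - Cpow q (S n)) * ((1 - w) * aseq (dgeom w) q (S n)))
    by ring.
  rewrite IH, Cpow_mult_l, (Cpow_S w (S n)), (S_INR (S n)), RtoC_plus. ring.
Qed.

Definition lambert (q : C) (n : nat) : C := sumC (fun i => Cpow q (S i) / (1 - Cpow q (S i))) n.

Definition Cind (b : bool) : C := if b then 1 else 0.

Lemma sumC_Cind_length (P : nat -> bool) n :
  sumC (fun i => Cind (P (S i))) n = INR (length (filter P (seq 1 n))).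
Proof.
  induction n as [|n IH]; [reflexivity|].
  cbn [sumC]. rewrite IH, seq_S, filter_app, length_app, plus_INR, RtoC_plus. simpl.
  unfold Cind. destruct (P (S n)); reflexivity.
Qed.

Lemma sigma0_sumC m n : (1 <= m <= n)%nat ->
  RtoC (INR (sigma0 m)) = sumC (fun d => Cind (m mod S d =? 0)) n.
Proof.
  intros Hm. replace n with (m + (n - m))%nat by lia.
  rewrite sumC_add, (sumC_Cind_length (fun d => m mod d =? 0)).
  rewrite (sumC_ext _ (fun _ => 0)), sumC_0; [unfold sigma0; ring|].
  intros i _. rewrite Nat.mod_small by lia. unfold Cind.
  destruct (Nat.eqb_spec m 0); [lia|reflexivity].
Qed.

Lemma succ_div_mod d n : (0 < d)%nat ->
  (S n mod d = 0 /\ d * (S n / d + 1) = S n + d /\ d * (n / d + 1) = S n)%nat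
  \/ (S n mod d <> 0 /\ S n / d = n / d)%nat.
Proof.
  intros Hd. assert (E := Nat.div_mod_eq n d). assert (B := Nat.mod_upper_bound n d ltac:(lia)).
  set (a := (n / d)%nat) in *. set (b := (n mod d)%nat) in *.
  destruct (Nat.eq_dec (S b) d) as [Hb|Hb].
  - left. assert (E2 : S n = (d * S a + 0)%nat) by nia.
    rewrite <- (Nat.mod_unique _ _ (S a) 0), <- (Nat.div_unique _ _ (S a) 0) by lia. nia.
  - right. assert (E2 : S n = (d * a + S b)%nat) by lia.
    rewrite <- (Nat.mod_unique _ _ a (S b)), <- (Nat.div_unique _ _ a (S b)) by lia. lia.
Qed.

Lemma sumC_multiples q d n : (0 < d)%nat ->
  (1 - Cpow q d) * sumC (fun i => Cind (S i mod d =? 0) * Cpow q (S i)) n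
  = Cpow q d - Cpow q (d * (n / d + 1)).
Proof.
  intros Hd. induction n as [|n IH].
  { rewrite Nat.Div0.div_0_l, Nat.mul_1_r. simpl; ring. }
  cbn [sumC]. rewrite Cmult_plus_distr_l, IH. unfold Cind.
  destruct (succ_div_mod d n Hd) as [[H1 [H2 H3]]|[H1 H2]].
  - rewrite H1, H2, H3, Cpow_add_r. rewrite Nat.eqb_refl. cbv beta iota. ring.
  - rewrite H2. destruct (Nat.eqb_spec (S n mod d) 0); [contradiction|cbv beta iota; ring].
Qed.

Lemma Csum_sigma0 q n :
  Csum (fun m => INR (sigma0 m) * Cpow q m) 1 n
  = sumC (fun d => sumC (fun i => Cind (S i mod S d =? 0) * Cpow q (S i)) n) n.
Proof.
  rewrite Csum_sumC, sumC_swap. apply sumC_ext. intros i Hi.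
  rewrite (sigma0_sumC (S i) n) by lia.
  rewrite Cmult_comm, <- sumC_scal_l. apply sumC_ext; intros; ring.
Qed.

(** * Roots of unity *)

Definition cis (t : R) : C := (cos t, sin t).

Lemma cis_add s t : cis s * cis t = cis (s + t).
Proof.
  unfold cis, Cmult; simpl. rewrite cos_plus, sin_plus.
  apply injective_projections; simpl; ring.
Qed.

Lemma cis_0 : cis 0 = 1.
Proof. unfold cis. rewrite cos_0, sin_0. reflexivity. Qed.

Lemma Cpow_cis t n : Cpow (cis t) n = cis (INR n * t).
Proof.
  induction n as [|n IH]; [simpl; rewrite Rmult_0_l, cis_0; reflexivity|].
  rewrite Cpow_S, IH, cis_add, S_INR. f_equal. ring.
Qed.

Lemma Cmod_cis t : Cmod (cis t) = 1%R.
Proof.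
  unfold Cmod, cis; simpl. assert (A := sin2_cos2 t). unfold Rsqr in A.
  replace (cos t * (cos t * 1) + sin t * (sin t * 1))%R with 1%R by lra. apply sqrt_1.
Qed.

Lemma cis_neq_0 t : cis t <> 0.
Proof. intros E. assert (A := Cmod_cis t). rewrite E, Cmod_0 in A. lra. Qed.

Lemma cis_inv t : / cis t = cis (- t).
Proof.
  assert (H : cis t * cis (- t) = 1) by (rewrite cis_add, Rplus_opp_r; apply cis_0).
  replace (cis (- t)) with (/ cis t * (cis t * cis (- t))) by (field; apply cis_neq_0).
  rewrite H. ring.
Qed.

Lemma cis_2PI_mult k : cis (2 * PI * IZR k) = 1.
Proof.
  assert (Hnat : forall m, (cos (2 * PI * INR m) = 1 /\ sin (2 * PI * INR m) = 0)%R).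
  { intros m. replace (2 * PI * INR m)%R with (0 + 2 * INR m * PI)%R by ring.
    rewrite cos_period, sin_period, cos_0, sin_0. split; reflexivity. }
  unfold cis. destruct (Z_le_gt_dec 0 k).
  - rewrite <- (Z2Nat.id k), <- INR_IZR_INZ by assumption.
    destruct (Hnat (Z.to_nat k)) as [-> ->]. reflexivity.
  - replace k with (- Z.of_nat (Z.to_nat (- k)))%Z by lia.
    rewrite opp_IZR, <- INR_IZR_INZ, Ropp_mult_distr_r_reverse, cos_neg, sin_neg.
    destruct (Hnat (Z.to_nat (- k))) as [-> ->]. rewrite Ropp_0. reflexivity.
Qed.

Lemma cis_neq_1 t : (0 < t < 2 * PI)%R -> cis t <> 1.
Proof.
  intros [H1 H2] E. unfold cis in E. injection E. intros Hs Hc.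
  destruct (Rtotal_order t PI) as [Hlt|[Heq|Hgt]].
  - assert (A := sin_gt_0 t H1 Hlt). lra.
  - subst. rewrite cos_PI in Hc. lra.
  - assert (A := sin_lt_0 t Hgt H2). lra.
Qed.

Lemma Cmod_Cpow_zetaN N k : Cmod (Cpow (zetaN N) k) = 1%R.
Proof. change (zetaN N) with (cis (2 * PI / INR N)). rewrite Cpow_cis. apply Cmod_cis. Qed.

Lemma Cpowz_zetaN N m : Cpowz (zetaN N) m = cis (IZR m * (2 * PI / INR N)).
Proof.
  change (zetaN N) with (cis (2 * PI / INR N)). unfold Cpowz.
  destruct (Z.leb_spec 0 m).
  - rewrite Cpow_cis, INR_IZR_INZ, Z2Nat.id by assumption. reflexivity.
  - rewrite Cpow_cis, INR_IZR_INZ, Z2Nat.id, cis_inv by lia.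
    f_equal. rewrite opp_IZR. ring.
Qed.

Lemma Cpowz_zetaN_mul_Cpow N i k p :
  Cpowz (zetaN N) ((1 - Z.of_nat (S i)) * Z.of_nat k) * Cpow (Cpow (zetaN N) k) p
  = Cpow (cis (IZR (Z.of_nat p - Z.of_nat i) * (2 * PI / INR N))) k.
Proof.
  rewrite Cpowz_zetaN, <- Cpow_mult_r. change (zetaN N) with (cis (2 * PI / INR N)).
  rewrite !Cpow_cis, cis_add. f_equal.
  rewrite mult_INR, !INR_IZR_INZ, mult_IZR, !minus_IZR, Nat2Z.inj_succ, succ_IZR. ring.
Qed.

Lemma cis_root_neq_1 N y : (0 < y < Z.of_nat N)%Z -> cis (IZR y * (2 * PI / INR N)) <> 1.
Proof.
  intros Hy. apply cis_neq_1.
  assert (HN : (0 < INR N)%R) by (rewrite INR_IZR_INZ; apply IZR_lt; lia).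
  assert (0 < IZR y)%R by (apply IZR_lt; lia).
  assert (IZR y < INR N)%R by (rewrite INR_IZR_INZ; apply IZR_lt; lia).
  assert (0 < 2 * PI / INR N)%R by (apply Rdiv_lt_0_compat; [generalize PI_RGT_0; lra|exact HN]).
  split; [apply Rmult_lt_0_compat; assumption|].
  apply Rlt_le_trans with (INR N * (2 * PI / INR N))%R;
    [apply Rmult_lt_compat_r; assumption|right; field; lra].
Qed.

Lemma Cpow_zetaN_neq_1 N k : (0 < k < N)%nat -> Cpow (zetaN N) k <> 1.
Proof.
  intros Hk. change (zetaN N) with (cis (2 * PI / INR N)).
  rewrite Cpow_cis, INR_IZR_INZ. apply cis_root_neq_1. lia.
Qed.

Lemma cis_root_mod N x : (0 < N)%nat ->
  cis (IZR x * (2 * PI / INR N)) = cis (IZR (x mod Z.of_nat N) * (2 * PI / INR N)).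
Proof.
  intros HN. rewrite (Z_div_mod_eq_full x (Z.of_nat N)) at 1.
  rewrite plus_IZR, mult_IZR, <- INR_IZR_INZ.
  replace ((INR N * IZR (x / Z.of_nat N) + IZR (x mod Z.of_nat N)) * (2 * PI / INR N))%R
    with (2 * PI * IZR (x / Z.of_nat N) + IZR (x mod Z.of_nat N) * (2 * PI / INR N))%R
    by (field; apply not_0_INR; lia).
  rewrite <- cis_add, cis_2PI_mult. ring.
Qed.

Lemma sumC_Cpow_cis_vanish N x : (0 < N)%nat -> (x mod Z.of_nat N <> 0)%Z ->
  sumC (Cpow (cis (IZR x * (2 * PI / INR N)))) N = 0.
Proof.
  intros HN Hx. set (w := cis (IZR x * (2 * PI / INR N))).
  assert (HwN : Cpow w N = 1).
  { unfold w. rewrite Cpow_cis.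
    replace (INR N * (IZR x * (2 * PI / INR N)))%R with (2 * PI * IZR x)%R
      by (field; apply not_0_INR; lia).
    apply cis_2PI_mult. }
  assert (Hw1 : 1 - w <> 0).
  { intros Z. apply (cis_root_neq_1 N (x mod Z.of_nat N)).
    - assert (B := Z.mod_pos_bound x (Z.of_nat N) ltac:(lia)). lia.
    - rewrite <- cis_root_mod by exact HN. fold w.
      replace w with (1 - (1 - w)) by ring. rewrite Z. ring. }
  assert (G := sumC_geom w N). rewrite HwN in G.
  replace (sumC (Cpow w) N) with (/ (1 - w) * ((1 - w) * sumC (Cpow w) N)) by (field; exact Hw1).
  rewrite G. ring.
Qed.

Lemma sumC_Cpow_cis_multiple N a : (0 < N)%nat ->
  sumC (Cpow (cis (IZR (Z.of_nat N * a) * (2 * PI / INR N)))) N = INR N.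
Proof.
  intros HN. rewrite mult_IZR, <- INR_IZR_INZ.
  replace (INR N * IZR a * (2 * PI / INR N))%R with (2 * PI * IZR a)%R
    by (field; apply not_0_INR; lia).
  rewrite cis_2PI_mult, <- sumC_const_1. apply sumC_ext. intros; apply Cpow_1_l.
Qed.

Lemma periodic_mult N (f : nat -> C) : (forall n, (1 <= n)%nat -> f (n + N)%nat = f n) ->
  forall a m, (1 <= m)%nat -> f (m + N * a)%nat = f m.
Proof.
  intros H a. induction a as [|a IH]; intros m Hm.
  { rewrite Nat.mul_0_r, Nat.add_0_r. reflexivity. }
  replace (m + N * S a)%nat with (m + N * a + N)%nat by lia. rewrite H by lia. apply IH, Hm.
Qed.

Lemma fourier_expansion N (f : nat -> C) : (0 < N)%nat ->
  (forall n, (1 <= n)%nat -> f (n + N)%nat = f n) ->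
  forall j, (1 <= j)%nat ->
  f j = sumC (fun k => ccoef f N (Z.of_nat k) * geom (Cpow (zetaN N) k) j) N.
Proof.
  intros HN Hper j Hj. unfold ccoef, geom.
  rewrite (sumC_ext _ (fun k => sumC (fun i => / INR N * f (S i)
     * Cpow (cis (IZR (Z.of_nat (pred j) - Z.of_nat i) * (2 * PI / INR N))) k) N)).
  2: { intros k _. rewrite Csum_sumC, <- Cmult_assoc, <- sumC_scal_r, <- sumC_scal_l.
       apply sumC_ext. intros i _. rewrite <- Cpowz_zetaN_mul_Cpow. ring. }
  rewrite sumC_swap.
  set (a := (pred j / N)%nat). set (i0 := (pred j mod N)%nat).
  assert (Hdm : pred j = (N * a + i0)%nat) by apply Nat.div_mod_eq.
  assert (Hi0 : (i0 < N)%nat) by (apply Nat.mod_upper_bound; lia).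
  assert (HN' : RtoC (INR N) <> 0)
    by (intros E; apply RtoC_inj in E; revert E; apply not_0_INR; lia).
  rewrite (sumC_single _ N i0 Hi0).
  - rewrite sumC_scal_l.
    replace (Z.of_nat (pred j) - Z.of_nat i0)%Z with (Z.of_nat N * Z.of_nat a)%Z by lia.
    rewrite sumC_Cpow_cis_multiple by exact HN.
    replace j with (S i0 + N * a)%nat at 1 by lia.
    rewrite (periodic_mult N f Hper) by lia. field. exact HN'.
  - intros i Hi Hne. rewrite sumC_scal_l, sumC_Cpow_cis_vanish; [ring|lia|].
    rewrite Hdm, Nat2Z.inj_add, Nat2Z.inj_mul. intros Hm.
    apply Z.mod_divide in Hm; [|lia]. destruct Hm as [k Hk].
    destruct (Z.lt_trichotomy k (Z.of_nat a)) as [Hlt|[Heq|Hgt]]; nia.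
Qed.

(** * Limits for |q| < 1 *)

Section Limits.

Variable q : C.
Hypothesis Hq : (Cmod q < 1)%R.

Let r := Cmod q.

Let Hr0 : (0 <= r)%R.
Proof. apply Cmod_ge_0. Qed.

Let Hr : (0 <= r < 1)%R.
Proof. split; [exact Hr0|exact Hq]. Qed.

Let Hr1 : (0 <= r <= 1)%R.
Proof. destruct Hr; lra. Qed.

Let K := exp (/ (1 - r)).

Let Hrprod m : (1 <= rprod r m <= K)%R.
Proof. split; [apply rprod_ge_1, Hr0|apply rprod_le_exp, Hr]. Qed.

Let c := exp (- (r / (1 - r)) / (1 - r)).

Let Hc : (0 < c)%R.
Proof. apply exp_pos. Qed.

Let Hc_qpoch m : (c <= Cmod (qpoch q q m))%R.
Proof. apply Cmod_qpoch_ge; exact Hq. Qed.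

Lemma Cmod_aseq_geom_sub_0 u n : (Cmod u <= 1)%R ->
  (Cmod (aseq (geom u) q n - aseq (geom 0) q n) <= INR n * rprod r n * Cmod u)%R.
Proof.
  intros Hu.
  apply (Cmod_recurrence_le r (Cmod u) (Cpow q) (fun k => Cpow u k - Cpow 0 k)
           (fun k => aseq (geom u) q k - aseq (geom 0) q k)); [exact Hr0|simpl; ring|..].
  - intros k _. cbn [aseq]. change (geom u (S k)) with (Cpow u k).
    change (geom 0 (S k)) with (Cpow 0 k). ring.
  - intros k _. rewrite Cmod_pow. apply Rle_refl.
  - intros [|k] _; simpl Cpow.
    + replace (1 - 1) with (RtoC 0) by ring. rewrite Cmod_0. apply Cmod_ge_0.
    + replace (u * Cpow u k - 0 * Cpow 0 k) with (u * Cpow u k) by ring.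
      rewrite Cmod_mult, Cmod_pow.
      assert (A := pow_le_1 (Cmod u) k (conj (Cmod_ge_0 u) Hu)).
      assert (B := Cmod_ge_0 u). nra.
Qed.

(* Iterating the functional equation [aseq_geom_fe] along w, wq, ..., wq^(m-1). *)
Lemma Cmod_qpoch_aseq_geom_sub w m n : (Cmod w <= 1)%R ->
  (Cmod (qpoch w q m * aseq (geom w) q (S n) - aseq (geom (w * Cpow q m)) q (S n))
    <= INR m * rprod r m * Cmod w ^ S n)%R.
Proof.
  intros Hw. assert (Hw0 := Cmod_ge_0 w).
  apply (Cmod_recurrence_le r (Cmod w ^ S n) (fun k => w * Cpow q k)
           (fun k => - Cpow (w * Cpow q k) (S n))
           (fun k => qpoch w q k * aseq (geom w) q (S n) - aseq (geom (w * Cpow q k)) q (S n)));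
    [exact Hr0| |..].
  - simpl. rewrite Cmult_1_r. ring.
  - intros k _. simpl qpoch.
    assert (FE := aseq_geom_fe (w * Cpow q k) q n).
    replace (w * Cpow q k * q) with (w * Cpow q (S k)) in FE by (simpl; ring).
    assert (E : aseq (geom (w * Cpow q (S k))) q (S n)
      = (1 - w * Cpow q k) * aseq (geom (w * Cpow q k)) q (S n) + Cpow (w * Cpow q k) (S n))
      by (rewrite FE; ring).
    rewrite E; ring.
  - intros k _. rewrite Cmod_mult_pow. fold r.
    assert (0 <= r ^ k)%R by (apply pow_le, Hr0). nra.
  - intros k _. rewrite Cmod_opp, Cmod_pow, Cmod_mult_pow. fold r.
    assert (r ^ k <= 1)%R by (apply pow_le_1, Hr1).
    assert (0 <= r ^ k)%R by (apply pow_le, Hr0).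
    apply pow_incr. split; [apply Rmult_le_pos|]; nra.
Qed.

Lemma Cmod_qpoch_aseq_geom_sub_qpoch w n : (Cmod w <= r)%R ->
  (Cmod (qpoch w q (S n) * aseq (geom w) q (S n) - qpoch q q n)
    <= 2 * K * (INR (S n) * INR (S n) * r ^ S n))%R.
Proof.
  intros Hw. set (m := S n). set (u := w * Cpow q m).
  assert (Hw0 := Cmod_ge_0 w).
  assert (Hrm : (0 <= r ^ m <= 1)%R) by (split; [apply pow_le, Hr0|apply pow_le_1, Hr1]).
  assert (Hu : (Cmod u <= r ^ m)%R) by (unfold u; rewrite Cmod_mult_pow; fold r; nra).
  assert (Hwm : (Cmod w ^ m <= r ^ m)%R) by (apply pow_incr; lra).
  assert (A := Cmod_qpoch_aseq_geom_sub w m n ltac:(lra)). fold u m in A.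
  assert (B := Cmod_aseq_geom_sub_0 u m ltac:(lra)).
  unfold m in B at 2. rewrite aseq_geom_0 in B. fold m in B.
  replace (qpoch w q m * aseq (geom w) q m - qpoch q q n)
    with ((qpoch w q m * aseq (geom w) q m - aseq (geom u) q m)
          + (aseq (geom u) q m - qpoch q q n))
    by ring.
  eapply Rle_trans; [apply Cmod_triangle|].
  assert (Hm : (1 <= INR m)%R) by (unfold m; rewrite S_INR; generalize (pos_INR n); lra).
  assert (HK := Hrprod m).
  assert (E : forall x, (0 <= x <= r ^ m)%R ->
                (INR m * rprod r m * x <= K * (INR m * INR m * r ^ m))%R).
  { intros x Hx. apply Rle_trans with (INR m * K * r ^ m)%R.
    - apply Rmult_le_compat; [apply Rmult_le_pos; lra|lra|apply Rmult_le_compat_l; lra|lra].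
    - assert (0 <= K * r ^ m)%R by (apply Rmult_le_pos; lra).
      assert (0 <= (INR m - 1) * (INR m * (K * r ^ m)))%R by (apply Rmult_le_pos; nra).
      nra. }
  assert (E1 := E _ (conj (Cmod_ge_0 u) Hu)). assert (E2 := E _ (conj (pow_le _ m Hw0) Hwm)).
  lra.
Qed.

Lemma aseq_geom_cv w : (Cmod w <= r)%R -> cv (aseq (geom w) q) (qpoch_inf q q / qpoch_inf w q).
Proof.
  intros Hw. assert (Hw1 : (Cmod w < 1)%R) by (destruct Hr; lra).
  apply cv_S_iff.
  apply (cv_ext (fun n => (qpoch w q (S n) * aseq (geom w) q (S n)) * / qpoch w q (S n))).
  { intros n. field. apply qpoch_neq_0; assumption. }
  apply cv_mult.
  - apply (cv_of_n2_pow_close _ (qpoch q q) _ (2 * K) r Hr); [apply qpoch_cv; lra|].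
    intros n. apply Cmod_qpoch_aseq_geom_sub_qpoch, Hw.
  - apply (cv_inv _ _ (exp (- (Cmod w / (1 - Cmod w)) / (1 - r)))).
    + apply cv_S_iff, qpoch_cv; lra.
    + apply exp_pos.
    + intros n; apply Cmod_qpoch_ge; assumption.
    + apply qpoch_inf_neq_0; assumption.
Qed.

Lemma Csum_geom_sub_aseq_cv z : (Cmod z <= 1)%R -> z <> 1 ->
  cv (fun n => Csum (geom z) 1 n - aseq (geom z) q n) (/ (1 - z) - qpoch_inf q q / qpoch_inf z q).
Proof.
  intros Hz Hz1.
  assert (Hz1' : 1 - z <> 0).
  { intros E. apply Hz1. replace z with (1 - (1 - z)) by ring. rewrite E; ring. }
  assert (Hzq : (Cmod (z * q) <= r)%R).
  { rewrite Cmod_mult. assert (A := Cmod_ge_0 q). fold r. nra. }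
  assert (Hzq1 : (Cmod (z * q) < 1)%R) by (destruct Hr; lra).
  rewrite (qpoch_inf_S z q Hz Hq).
  replace (/ (1 - z) - qpoch_inf q q / ((1 - z) * qpoch_inf (z * q) q))
    with (/ (1 - z) * (1 - qpoch_inf q q / qpoch_inf (z * q) q))
    by (field; split; [apply qpoch_inf_neq_0|]; assumption).
  apply cv_S_iff.
  apply (cv_ext (fun n => / (1 - z) * (1 - aseq (geom (z * q)) q (S n)))).
  { intros n.
    replace (Csum (geom z) 1 (S n) - aseq (geom z) q (S n))
      with (/ (1 - z) * ((1 - z) * Csum (geom z) 1 (S n) - (1 - z) * aseq (geom z) q (S n)))
      by (field; exact Hz1').
    rewrite Csum_geom, aseq_geom_fe. ring. }
  apply cv_scal, cv_minus; [apply cv_const|apply cv_S_iff, aseq_geom_cv, Hzq].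
Qed.

Lemma Cmod_1_minus_pow_ge d : (0 < d)%nat -> (1 - r <= Cmod (1 - Cpow q d))%R.
Proof.
  intros Hd. assert (A := Cmod_triangle (1 - Cpow q d) (Cpow q d)).
  replace (1 - Cpow q d + Cpow q d) with (RtoC 1) in A by ring.
  rewrite Cmod_1, Cmod_pow in A. fold r in A.
  assert (r ^ d <= r ^ 1)%R by (apply pow_le_pow_anti; [exact Hr1|lia]).
  rewrite pow_1 in H. lra.
Qed.

Lemma lambert_cv : cv (lambert q) (Clim (lambert q)).
Proof.
  apply cv_Clim_of_geom_increments with (/ (1 - r))%R r; [exact Hr|].
  intros n. unfold lambert. cbn [sumC].
  match goal with |- (Cmod (?s + ?t - ?s) <= _)%R => replace (s + t - s) with t by ring end.
  assert (Hr' : (0 < 1 - r)%R) by (destruct Hr; lra).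
  eapply Rle_trans; [apply Cmod_div_le; [exact Hr'|apply Cmod_1_minus_pow_ge; lia]|].
  rewrite Cmod_pow. fold r.
  assert (r ^ S n <= r ^ n)%R by (apply pow_le_pow_anti; [exact Hr1|lia]).
  unfold Rdiv. rewrite Rmult_comm.
  apply Rmult_le_compat_l; [apply Rlt_le, Rinv_0_lt_compat, Hr'|assumption].
Qed.

Lemma Cmod_sumC_multiples_sub_le d n : (0 < d)%nat ->
  (Cmod (sumC (fun i => Cind (S i mod d =? 0) * Cpow q (S i))%C n - Cpow q d / (1 - Cpow q d))
   <= r ^ S n / (1 - r))%R.
Proof.
  intros Hd. assert (A := Cmod_1_minus_pow_ge d Hd).
  assert (Hr' : (0 < 1 - r)%R) by (destruct Hr; lra).
  assert (Hnz : 1 - Cpow q d <> 0) by (intros Z; rewrite Z, Cmod_0 in A; lra).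
  assert (E : sumC (fun i => Cind (S i mod d =? 0) * Cpow q (S i)) n
    = (Cpow q d - Cpow q (d * (n / d + 1))) / (1 - Cpow q d))
    by (rewrite <- sumC_multiples by exact Hd; field; exact Hnz).
  rewrite E.
  replace ((Cpow q d - Cpow q (d * (n / d + 1))) / (1 - Cpow q d) - Cpow q d / (1 - Cpow q d))
    with (- Cpow q (d * (n / d + 1)) / (1 - Cpow q d)) by (field; exact Hnz).
  eapply Rle_trans; [apply (Cmod_div_le _ _ (1 - r)); [exact Hr'|exact A]|].
  rewrite Cmod_opp, Cmod_pow. fold r. unfold Rdiv.
  apply Rmult_le_compat_r; [apply Rlt_le, Rinv_0_lt_compat, Hr'|].
  apply pow_le_pow_anti; [exact Hr1|].
  assert (E1 := Nat.div_mod_eq n d). assert (E2 := Nat.mod_upper_bound n d ltac:(lia)). nia.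
Qed.

Lemma S0_eq_lim_lambert : S0 q = Clim (lambert q).
Proof.
  apply cv_Clim, (cv_of_n2_pow_close _ (lambert q) _ (/ (1 - r)) r Hr lambert_cv).
  intros n. rewrite Csum_sigma0. unfold lambert. rewrite <- sumC_minus.
  eapply Rle_trans; [apply Cmod_sumC_le; intros d _; apply Cmod_sumC_multiples_sub_le; lia|].
  assert (0 <= r ^ S n)%R by (apply pow_le, Hr0).
  assert (0 < / (1 - r))%R by (apply Rinv_0_lt_compat; destruct Hr; lra).
  assert (A := pos_INR n). rewrite S_INR. unfold Rdiv.
  assert (0 <= INR n * r ^ S n)%R by nra.
  assert (0 <= (INR n + 1) * r ^ S n)%R by nra.
  assert (INR n * r ^ S n <= (INR n + 1) * (INR n + 1) * r ^ S n)%R by nra. nra.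
Qed.

Lemma Cmod_aseq_dgeom_le u m : (Cmod u <= 1)%R ->
  (Cmod (aseq (dgeom u) q m) <= INR m * rprod r m * (INR m * Cmod u))%R.
Proof.
  intros Hu. assert (Hu0 := Cmod_ge_0 u).
  apply (Cmod_recurrence_le r (INR m * Cmod u) (Cpow q) (fun k => INR k * Cpow u k)
           (aseq (dgeom u) q)); [exact Hr0|reflexivity|..].
  - intros k _. cbn [aseq]. change (dgeom u (S k)) with (INR k * Cpow u k). ring.
  - intros k _. rewrite Cmod_pow. apply Rle_refl.
  - intros k Hk. rewrite Cmod_mult, Cmod_R, Rabs_pos_eq, Cmod_pow by apply pos_INR.
    assert (A := le_INR k m ltac:(lia)). assert (B := pos_INR k).
    destruct k as [|k].
    { change (INR 0) with 0%R. rewrite Rmult_0_l. apply Rmult_le_pos; [apply pos_INR|exact Hu0]. }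
    apply Rle_trans with (INR (S k) * Cmod u)%R; [|apply Rmult_le_compat_r; assumption].
    apply Rmult_le_compat_l; [exact B|].
    assert (C := pow_le_1 (Cmod u) k (conj Hu0 Hu)).
    change (Cmod u ^ S k)%R with (Cmod u * Cmod u ^ k)%R. nra.
Qed.

Lemma Cmod_aseq_geom_qpow_sub i n :
  (Cmod (aseq (geom (Cpow q (S i))) q (S n) - qpoch q q i) <= INR i * rprod r i * r ^ S n)%R.
Proof.
  apply (Cmod_recurrence_le r (r ^ S n) (fun k => Cpow q (S k))
           (fun k => Cpow (Cpow q (S k)) (S n))
           (fun k => aseq (geom (Cpow q (S k))) q (S n) - qpoch q q k)); [exact Hr0| |..].
  - rewrite Cpow_1_r, aseq_geom_q. simpl; ring.
  - intros k _. assert (FE := aseq_geom_fe (Cpow q (S k)) q n).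
    replace (Cpow q (S k) * q) with (Cpow q (S (S k))) in FE by (simpl; ring).
    assert (E : aseq (geom (Cpow q (S (S k)))) q (S n)
      = (1 - Cpow q (S k)) * aseq (geom (Cpow q (S k))) q (S n) + Cpow (Cpow q (S k)) (S n))
      by (rewrite FE; ring).
    rewrite E. simpl qpoch. simpl Cpow. ring.
  - intros k _. rewrite Cmod_pow. apply pow_le_pow_anti; [exact Hr1|lia].
  - intros k _. rewrite !Cmod_pow, <- pow_mult. fold r.
    apply pow_le_pow_anti; [exact Hr1|nia].
Qed.

(* Iterating the functional equation [aseq_dgeom_fe] along q, q^2, ..., q^m. *)
Lemma aseq_dgeom_telescope n m :
  aseq (dgeom q) q (S n)
  = aseq (dgeom (Cpow q (S m))) q (S n) / qpoch q q m
    + sumC (fun i => (Cpow q (S i) * aseq (geom (Cpow q (S i))) q (S n)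
                      - INR (S n) * Cpow (Cpow q (S i)) (S n)) / qpoch q q (S i)) m.
Proof.
  assert (Hnz : forall k, qpoch q q k <> 0) by (intros; apply qpoch_neq_0; assumption).
  induction m as [|m IH].
  { rewrite Cpow_1_r. simpl. field. }
  rewrite IH. cbn [sumC]. set (w := Cpow q (S m)).
  assert (FE := aseq_dgeom_fe w q n).
  replace (w * q) with (Cpow q (S (S m))) in FE by (unfold w; simpl; ring).
  assert (E : aseq (dgeom (Cpow q (S (S m)))) q (S n)
    = (1 - w) * aseq (dgeom w) q (S n) - w * aseq (geom w) q (S n) + INR (S n) * Cpow w (S n))
    by (rewrite FE; ring).
  assert (EP : qpoch q q (S m) = qpoch q q m * (1 - w)) by (unfold w; simpl; ring).
  assert (Hw : 1 - w <> 0) by (intros Z; apply (Hnz (S m)); rewrite EP, Z; ring).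
  rewrite E, EP. field. split; [exact Hw|apply Hnz].
Qed.

Lemma Cmod_aseq_dgeom_qpow_div_le m :
  (Cmod (aseq (dgeom (Cpow q (S m))) q m / qpoch q q m) <= K * (INR m * INR m * r ^ m) / c)%R.
Proof.
  eapply Rle_trans; [apply Cmod_div_le; [exact Hc|apply Hc_qpoch]|].
  unfold Rdiv. apply Rmult_le_compat_r; [apply Rlt_le, Rinv_0_lt_compat, Hc|].
  assert (Hu : (Cmod (Cpow q (S m)) <= r ^ m)%R).
  { rewrite Cmod_pow. apply pow_le_pow_anti; [exact Hr1|lia]. }
  assert (Hrm : (0 <= r ^ m <= 1)%R) by (split; [apply pow_le, Hr0|apply pow_le_1, Hr1]).
  eapply Rle_trans; [apply Cmod_aseq_dgeom_le; lra|].
  assert (A := pos_INR m). assert (B := Hrprod m). assert (C0 := Cmod_ge_0 (Cpow q (S m))).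
  assert (0 <= INR m * Cmod (Cpow q (S m)) <= INR m * r ^ m)%R by (split; nra).
  assert (0 <= INR m * rprod r m)%R by nra.
  apply Rle_trans with (INR m * rprod r m * (INR m * r ^ m))%R; [apply Rmult_le_compat_l; lra|].
  assert (0 <= INR m * (INR m * r ^ m))%R by nra. nra.
Qed.

Lemma Cmod_telescope_term_sub_le n i : (i <= n)%nat ->
  (Cmod ((Cpow q (S i) * aseq (geom (Cpow q (S i))) q (S n)
          - INR (S n) * Cpow (Cpow q (S i)) (S n)) / qpoch q q (S i)
         - Cpow q (S i) / (1 - Cpow q (S i)))
   <= (K + 1) * (INR (S n) * r ^ S n) / c)%R.
Proof.
  intros Hi. set (w := Cpow q (S i)). set (m := S n).
  assert (EP : qpoch q q (S i) = qpoch q q i * (1 - w)) by (unfold w; simpl; ring).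
  assert (Hnz := qpoch_neq_0 q q (S i) Hq Hq). rewrite EP in Hnz.
  replace ((w * aseq (geom w) q m - INR m * Cpow w m) / qpoch q q (S i) - w / (1 - w))
    with ((w * (aseq (geom w) q m - qpoch q q i) - INR m * Cpow w m) / qpoch q q (S i))
    by (rewrite EP; field; split; intros Z; apply Hnz; rewrite Z; ring).
  eapply Rle_trans; [apply Cmod_div_le; [exact Hc|apply Hc_qpoch]|].
  unfold Rdiv. apply Rmult_le_compat_r; [apply Rlt_le, Rinv_0_lt_compat, Hc|].
  eapply Rle_trans; [apply Cmod_triangle|].
  rewrite Cmod_opp, !Cmod_mult, Cmod_R, Rabs_pos_eq by apply pos_INR.
  assert (V := Cmod_aseq_geom_qpow_sub i n). fold w m in V.
  assert (Hw1 : (Cmod w <= 1)%R) by (unfold w; rewrite Cmod_pow; apply pow_le_1, Hr1).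
  assert (Hwm : (Cmod (Cpow w m) <= r ^ m)%R).
  { unfold w. rewrite !Cmod_pow, <- pow_mult. apply pow_le_pow_anti; [exact Hr1|unfold m; nia]. }
  assert (Hrm : (0 <= r ^ m)%R) by (apply pow_le, Hr0).
  assert (Hii : (INR i <= INR m)%R) by (apply le_INR; unfold m; lia).
  assert (A := pos_INR i). assert (B := Hrprod i).
  assert (X : (Cmod w * Cmod (aseq (geom w) q m - qpoch q q i) <= K * (INR m * r ^ m))%R).
  { apply Rle_trans with (1 * (INR i * rprod r i * r ^ m))%R.
    - apply Rmult_le_compat; [apply Cmod_ge_0|apply Cmod_ge_0|exact Hw1|exact V].
    - rewrite Rmult_1_l. assert (0 <= INR i * r ^ m)%R by nra.
      assert (INR i * r ^ m <= INR m * r ^ m)%R by nra. nra. }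
  assert (Y : (INR m * Cmod (Cpow w m) <= INR m * r ^ m)%R)
    by (apply Rmult_le_compat_l; [apply pos_INR|exact Hwm]).
  lra.
Qed.

Lemma Cmod_aseq_dgeom_sub_lambert_le n :
  (Cmod (aseq (dgeom q) q (S n) - lambert q (S n))
   <= (2 * K + 1) / c * (INR (S n) * INR (S n) * r ^ S n))%R.
Proof.
  rewrite (aseq_dgeom_telescope n (S n)). unfold lambert.
  match goal with |- (Cmod (?a + ?s - ?t) <= _)%R =>
    replace (a + s - t) with (a + (s - t)) by ring end.
  rewrite <- sumC_minus.
  eapply Rle_trans; [apply Cmod_triangle|].
  set (m := S n).
  assert (T : (Cmod (sumC (fun i => (Cpow q (S i) * aseq (geom (Cpow q (S i))) q m
                 - INR m * Cpow (Cpow q (S i)) m) / qpoch q q (S i)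
                 - Cpow q (S i) / (1 - Cpow q (S i)))%C m)
               <= INR m * ((K + 1) * (INR m * r ^ m) / c))%R).
  { apply Cmod_sumC_le. intros i Hi. apply Cmod_telescope_term_sub_le. unfold m in Hi; lia. }
  assert (H := Cmod_aseq_dgeom_qpow_div_le m).
  replace ((2 * K + 1) / c * (INR m * INR m * r ^ m))%R
    with (INR m * ((K + 1) * (INR m * r ^ m) / c) + K * (INR m * INR m * r ^ m) / c)%R
    by (field; apply Rgt_not_eq, Hc).
  lra.
Qed.

Lemma Csum_geom_1_sub_aseq_cv : cv (fun n => Csum (geom 1) 1 n - aseq (geom 1) q n) (S0 q).
Proof.
  apply (cv_ext (aseq (dgeom q) q)); [intros n; symmetry; apply Csum_geom_1_sub_aseq|].
  rewrite S0_eq_lim_lambert. apply cv_S_iff.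
  apply (cv_of_n2_pow_close _ (fun n => lambert q (S n)) _ ((2 * K + 1) / c) r Hr).
  - apply cv_S_iff, lambert_cv.
  - apply Cmod_aseq_dgeom_sub_lambert_le.
Qed.

End Limits.

Lemma aseq_linear (f : nat -> C) (c : nat -> C) (g : nat -> nat -> C) K q n :
  (forall j, (1 <= j)%nat -> f j = sumC (fun k => c k * g k j) K) ->
  aseq f q n = sumC (fun k => c k * aseq (g k) q n) K.
Proof.
  intros H. induction n as [|n IH]; simpl.
  - rewrite (sumC_ext _ (fun _ => 0)), sumC_0 by (intros; ring). reflexivity.
  - rewrite IH, H, <- sumC_scal_l, <- sumC_plus by lia. apply sumC_ext; intros; ring.
Qed.

Lemma Csum_linear (f : nat -> C) (c : nat -> C) (g : nat -> nat -> C) K n :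
  (forall j, (1 <= j)%nat -> f j = sumC (fun k => c k * g k j) K) ->
  Csum f 1 n = sumC (fun k => c k * Csum (g k) 1 n) K.
Proof.
  intros H. rewrite Csum_sumC, (sumC_ext _ (fun i => sumC (fun k => c k * g k (S i)) K))
    by (intros; apply H; lia).
  rewrite sumC_swap. apply sumC_ext. intros k _. rewrite Csum_sumC, sumC_scal_l. reflexivity.
Qed.

Lemma Csum_sub_aseq_linear_cv (f : nat -> C) (c L : nat -> C) (g : nat -> nat -> C) K q :
  (forall j, (1 <= j)%nat -> f j = sumC (fun k => c k * g k j) K) ->
  (forall k, (k < K)%nat -> cv (fun n => Csum (g k) 1 n - aseq (g k) q n) (L k)) ->
  cv (fun n => Csum f 1 n - aseq f q n) (sumC (fun k => c k * L k) K).
Proof.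
  intros Hf HL.
  apply (cv_ext (fun n => sumC (fun k => c k * (Csum (g k) 1 n - aseq (g k) q n)) K)).
  { intros n. rewrite (Csum_linear f c g K n Hf), (aseq_linear f c g K q n Hf), <- sumC_minus.
    apply sumC_ext; intros; ring. }
  apply cv_sumC. intros k Hk. apply cv_scal, HL, Hk.
Qed.

Lemma sumC_head_Csum (F : nat -> C) N : (0 < N)%nat -> sumC F N = F 0%nat + Csum F 1 (N - 1).
Proof. intros HN. destruct N as [|N]; [lia|]. rewrite sumC_Sl, Csum_sumC. do 2 f_equal. lia. Qed.

Theorem theorem1p3 (N : nat) (f : nat -> C) (q : C) :
  (0 < N)%nat ->
  (forall n : nat, (1 <= n)%nat -> f (n + N)%nat = f n) ->
  (Cmod q < 1)%R ->
  filterlim (fun n => Csum f 1 n - aseq f q n) eventually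
    (locally
       (ccoef f N 0 * S0 q
        - qpoch_inf q q *
            Csum (fun k => ccoef f N (Z.of_nat k) / qpoch_inf (Cpow (zetaN N) k) q) 1 (N - 1)
        + Csum (fun k => ccoef f N (Z.of_nat k) / (1 - Cpow (zetaN N) k)) 1 (N - 1))).
Proof.
  intros HN Hper Hq. apply cv_filterlim.
  set (c := fun k : nat => ccoef f N (Z.of_nat k)).
  set (L := fun k => match k with
    | O => S0 q
    | S _ => / (1 - Cpow (zetaN N) k) - qpoch_inf q q / qpoch_inf (Cpow (zetaN N) k) q end).
  replace (ccoef f N 0 * S0 q - _ + _) with (sumC (fun k => c k * L k) N).
  2: { rewrite sumC_head_Csum, !Csum_sumC by exact HN.
       rewrite (sumC_ext _ (fun i => c (S i) / (1 - Cpow (zetaN N) (S i))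
                 - qpoch_inf q q * (c (S i) / qpoch_inf (Cpow (zetaN N) (S i)) q)))
         by (intros; unfold L, Cdiv; ring).
       rewrite sumC_minus, sumC_scal_l.
       change (c 0%nat * L 0%nat) with (ccoef f N 0 * S0 q). unfold c. ring. }
  apply (Csum_sub_aseq_linear_cv f c L (fun k => geom (Cpow (zetaN N) k))).
  - apply fourier_expansion; assumption.
  - intros [|k] Hk.
    + apply Csum_geom_1_sub_aseq_cv, Hq.
    + apply Csum_geom_sub_aseq_cv; [exact Hq|right; apply Cmod_Cpow_zetaN|].
      apply Cpow_zetaN_neq_1; lia.
Qed.
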